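(* Let $\mathbb{F}$ be a finite field, $m>1$ an integer, and $R=\mathbb{F}^{m\times m}$. Then the homogeneous weight partition $\mathcal{P}_{\mathrm{hom}}$ of $R$ is self-dual: for any generating character $\chi$ of $R$, $\mathcal{P}_{\mathrm{hom}}$ equals its left $\chi$-dual partition.
   Context: $\mathcal{P}_{\mathrm{hom}}$ is the partition of $R$ into level sets of the normalized homogeneous weight $\omega$ (the unique map $R\to\mathbb{R}$ with $\omega(0)=0$, $\omega(x)=\omega(y)$ whenever $Rx=Ry$, and $\sum_{y\in Rx}\omega(y)=|Rx|$ for $x\neq0$). Characters are group homomorphisms $(R,+)\to\mathbb{C}^*$; $\widehat{R}$ is an $R$-$R$-bimodule via $(r\cdot\chi)(v)=\chi(vr)$, $(\chi\cdot r)(v)=\chi(rv)$; a generating character is $\chi$ with $\widehat{R}=R\cdot\chi$. For a partition $\mathcal{P}=P_1\mid\cdots\mid P_M$ of $R$, its left $\chi$-dual partition is given by the equivalence relation $b\sim b'$ iff $\sum_{a\in P_i}\chi(ab)=\sum_{a\in P_i}\chi(ab')$ for all $i$. Two partitions are equal if their blocks coincide up to ordering. *)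

From HB Require Import structures.
From mathcomp Require Import all_boot all_order all_algebra all_field.
From mathcomp Require Import reals.
Set Implicit Arguments. Unset Strict Implicit. Unset Printing Implicit Defensive.
Import Order.TTheory GRing.Theory Num.Theory.
Local Open Scope ring_scope.

Section Defs.
Variables (F : finFieldType) (m : nat).
Local Notation M := 'M[F]_m.

Definition lideal (x : M) : {set M} := [set r *m x | r : M].

Definition is_norm_hom_weight (Rr : realType) (w : M -> Rr) : Prop :=
  [/\ w 0 = 0,
      (forall x y : M, lideal x = lideal y -> w x = w y) &
      (forall x : M, x != 0 -> \sum_(y in lideal x) w y = #|lideal x|%:R)].

Definition level_partition (Rr : realType) (w : M -> Rr) : {set {set M}} :=
  [set [set a | w a == w x] | x : M].

(* characters (R,+) -> C^* ; values taken in algC (all roots of unity lie there) *)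
Definition is_character (chi : M -> algC) : Prop :=
  (forall x y : M, chi (x + y) = chi x * chi y) /\ (forall x : M, chi x != 0).

Definition generating_character (chi : M -> algC) : Prop :=
  is_character chi /\
  forall psi : M -> algC, is_character psi ->
    exists r : M, forall v : M, psi v = chi (v *m r).

Definition left_dual_rel (P : {set {set M}}) (chi : M -> algC) (b b' : M) : bool :=
  [forall B in P, \sum_(a in B) chi (a *m b) == \sum_(a in B) chi (a *m b')].

Definition left_dual_partition (P : {set {set M}}) (chi : M -> algC) : {set {set M}} :=
  [set [set b' | left_dual_rel P chi b b'] | b : M].

End Defs.

From HB Require Import structures.
From mathcomp Require Import all_boot all_order all_algebra all_field.
From mathcomp Require Import reals.
From mathcomp Require Import all_fingroup all_character.
From mathcomp Require Import ring lra.
Set Implicit Arguments. Unset Strict Implicit. Unset Printing Implicit Defensive.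
Import Order.TTheory GRing.Theory Num.Theory.
Local Open Scope ring_scope.

(* On M_m(F) the normalized homogeneous weight depends only on the rank:
   w x = 1 - G (rank x) with G j = (-1)^j prod_(i < j) q^i / (q^m - q^i).
   The recursion q^j G j + (q^m - q^j) G (j+1) = 0 makes the sum of G o rank
   over every nonzero left ideal vanish, and since |G| decreases with
   alternating signs, w separates ranks.  So the level partition is the
   partition into rank classes, i.e. the orbits of x |-> u x v for units u, v.
   A generating character lets units move from one side of a product to the
   other (through the Nakayama automorphism), so the block sums defining the
   dual relation and the Fourier transforms of the blocks are both constant on
   rank classes; Fourier inversion then shows that the dual classes are
   exactly the rank classes. *)

Lemma additive_char_separates (V : finZmodType) (x : V) : x != 0 ->
  exists psi : V -> algC, [/\ forall a b, psi (a + b) = psi a * psi b,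
                              forall a, psi a != 0 & psi x != 1].
Proof.
move=> nz_x; pose gT := FinRing.Zmodule_to_finGroup V.
have linG := char_abelianP [set: gT]%G (FinRing.zmod_abelian _).
have [i chi_x] : exists i, (x : gT) \notin cfker 'chi[[set: gT]%G]_i.
  apply/existsP; rewrite -negb_forall; apply: contra nz_x => /forallP kerx.
  have : (x : gT) \in \bigcap_i cfker 'chi[[set: gT]%G]_i by apply/bigcapP.
  by rewrite TI_cfker_irr inE.
move: chi_x; rewrite cfkerEirr inE lin_char1 //= => chi_x.
exists (fun a => 'chi_i (a : gT)); split => // [a b | a].
- by apply: (lin_charM (linG i)); rewrite inE.
- by apply: lin_char_neq0; rewrite ?inE.
Qed.

Section GeneratingCharacter.
Variables (F : finFieldType) (m : nat) (chi : 'M[F]_m -> algC).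
Hypothesis chi_gen : generating_character chi.
Local Notation M := 'M[F]_m.

Lemma chiD (x y : M) : chi (x + y) = chi x * chi y.
Proof. by case: chi_gen => [[]]. Qed.

Lemma chi_neq0 (x : M) : chi x != 0.
Proof. by case: chi_gen => [[]]. Qed.

Lemma chi0 : chi 0 = 1.
Proof. by apply: (mulfI (chi_neq0 0)); rewrite mulr1 -chiD addr0. Qed.

Lemma chiB (x y : M) : chi (x - y) = chi x / chi y.
Proof.
apply: (mulIf (chi_neq0 y)); rewrite -chiD subrK mulfVK //; exact: chi_neq0.
Qed.

Lemma chi_nondeg_r (z : M) : z != 0 -> exists r, chi (z *m r) != 1.
Proof.
case/additive_char_separates => psi [psiD psi_neq0 psi_z].
have [r psiE] := chi_gen.2 psi (conj psiD psi_neq0).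
by exists r; rewrite -psiE.
Qed.

Lemma chi_mulmx_inj_r (x y : M) : (forall r, chi (x *m r) = chi (y *m r)) -> x = y.
Proof.
move=> chi_xy; apply/eqP; rewrite -subr_eq0; apply: contraT => /chi_nondeg_r[r].
by rewrite mulmxBl chiB chi_xy divff ?eqxx ?chi_neq0.
Qed.

Definition nakayama (x : M) : M :=
  odflt 0 [pick r | [forall y, chi (x *m y) == chi (y *m r)]].

Lemma nakayamaP (x y : M) : chi (x *m y) = chi (y *m nakayama x).
Proof.
rewrite /nakayama; case: pickP => [r /forallP/(_ y)/eqP // | no_r] /=.
have [r chi_xr] : exists r, forall y, chi (x *m y) = chi (y *m r).
  by apply: chi_gen.2; split=> [a b|a]; rewrite ?mulmxDr ?chiD ?chi_neq0.
by have /forallP[] := negbT (no_r r) => z; rewrite chi_xr.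
Qed.

Lemma nakayama_inj : injective nakayama.
Proof.
by move=> x y Exy; apply: chi_mulmx_inj_r => r; rewrite (nakayamaP x) (nakayamaP y) Exy.
Qed.

Lemma nakayama_surj (r : M) : exists x, nakayama x = r.
Proof. by have [g _ nakK] := injF_bij nakayama_inj; exists (g r). Qed.

Lemma chi_mulmx_inj_l (x y : M) : (forall r, chi (r *m x) = chi (r *m y)) -> x = y.
Proof.
have [[x' <-] [y' <-]] := (nakayama_surj x, nakayama_surj y) => chi_xy.
congr nakayama; apply: chi_mulmx_inj_r => r.
by rewrite (nakayamaP x') (nakayamaP y') chi_xy.
Qed.

Lemma nakayamaM (x y : M) : nakayama (x *m y) = nakayama x *m nakayama y.
Proof.
apply: chi_mulmx_inj_l => z; rewrite -(nakayamaP (x *m y)) -mulmxA (nakayamaP x).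
by rewrite -mulmxA (nakayamaP y) mulmxA.
Qed.

Lemma nakayama1 : nakayama 1%:M = 1%:M.
Proof. by apply: chi_mulmx_inj_l => z; rewrite -nakayamaP mul1mx mulmx1. Qed.

Lemma nakayama_unit (x : M) : (nakayama x \in unitmx) = (x \in unitmx).
Proof.
apply/idP/idP => [nak_x | x_unit]; last first.
  by case: (@mulmx1_unit _ _ (nakayama x) (nakayama (invmx x)));
     rewrite // -nakayamaM mulmxV ?nakayama1.
have [y nak_y] := nakayama_surj (invmx (nakayama x)).
suff /mulmx1_unit[] : x *m y = 1%:M by [].
by apply: nakayama_inj; rewrite nakayamaM nak_y mulmxV ?nakayama1.
Qed.

Lemma chi_nondeg_l (z : M) : z != 0 -> exists a, chi (a *m z) != 1.
Proof.
move=> nz_z; apply/existsP; rewrite -negb_forall; apply: contra nz_z => chi_z.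
apply/eqP/chi_mulmx_inj_l => a; rewrite mulmx0 chi0; exact/eqP/(forallP chi_z).
Qed.

Lemma sum_chi_mulmx_l (z : M) :
  \sum_a chi (a *m z) = if z == 0 then #|M|%:R else 0.
Proof.
case: eqP => [-> | /eqP/chi_nondeg_l[a0 chi_a0]].
  by under eq_bigr do rewrite mulmx0 chi0; rewrite sumr_const.
have : \sum_a chi (a *m z) = chi (a0 *m z) * \sum_a chi (a *m z).
  rewrite mulr_sumr (reindex_inj (addrI a0)) /=.
  by apply: eq_bigr => a _; rewrite mulmxDl chiD.
move/eqP; rewrite -subr_eq0 -{1}(mul1r (\sum_a _)) -mulrBl mulf_eq0 subr_eq0.
by rewrite eq_sym (negbTE chi_a0) => /eqP.
Qed.

Lemma chi_unit_transfer_l (u : M) : u \in unitmx ->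
  exists2 u', u' \in unitmx & forall y, chi (u *m y) = chi (y *m u').
Proof. by exists (nakayama u); rewrite ?nakayama_unit //; apply: nakayamaP. Qed.

Lemma chi_unit_transfer_r (u : M) : u \in unitmx ->
  exists2 u', u' \in unitmx & forall y, chi (y *m u) = chi (u' *m y).
Proof.
have [u' <-] := nakayama_surj u; rewrite nakayama_unit => u'_unit.
by exists u' => // y; rewrite (nakayamaP u').
Qed.

(* Fourier transform, with respect to [chi], of the indicator function of [B]. *)
Definition block_transform (B : {set M}) (a : M) : algC :=
  \sum_(c in B) chi (- (a *m c)).

Lemma sum_chi_block_transform (B : {set M}) (x : M) :
  \sum_a chi (a *m x) * block_transform B a = #|M|%:R *+ (x \in B).
Proof.
under eq_bigr do rewrite mulr_sumr; rewrite exchange_big /=.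
transitivity (\sum_(c in B) \sum_a chi (a *m (x - c))).
  by apply: eq_bigr => c _; apply: eq_bigr => a _; rewrite mulmxBr chiD.
under eq_bigr do rewrite sum_chi_mulmx_l subr_eq0.
rewrite -big_mkcondr /=; case: (boolP (x \in B)) => [xB | xNB].
  by rewrite (big_pred1 x) // => c; apply/andP/eqP => [[_ /eqP] | ->].
by rewrite big_pred0 // => c; apply: contraNF xNB => /andP[Bc /eqP ->].
Qed.

Section SelfDualPartition.
Variable P : {set {set M}}.
Hypothesis partP : partition P [set: M].

Let mem_pblockT (x : M) : x \in pblock P x.
Proof. by case/and3P: partP => /eqP covP _ _; rewrite mem_pblock covP inE. Qed.

Let pblockT (x : M) : pblock P x \in P.
Proof. by rewrite pblock_mem // -mem_pblock mem_pblockT. Qed.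

Lemma left_dual_rel_weighted (f : M -> algC) (b b' : M) :
  (forall a a', a' \in pblock P a -> f a' = f a) ->
  left_dual_rel P chi b b' ->
  \sum_a chi (a *m b) * f a = \sum_a chi (a *m b') * f a.
Proof.
move=> f_const /forall_inP rel_bb'.
case/and3P: partP => /eqP covP trivP P0.
have sum_blocks (g : M -> algC) : \sum_a g a = \sum_(B in P) \sum_(a in B) g a.
  by rewrite -big_trivIset // covP; apply: eq_bigl => a; rewrite inE.
rewrite !sum_blocks; apply: eq_bigr => B PB.
have /set0Pn[a0 Ba0] : B != set0 by apply: contraNneq P0 => <-.
have f_B a : a \in B -> f a = f a0.
  by move=> Ba; apply: f_const; rewrite (def_pblock trivP PB Ba0).
under eq_bigr => a Ba do rewrite f_B //.
under [RHS]eq_bigr => a Ba do rewrite f_B //.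
by rewrite -!mulr_suml (eqP (rel_bb' B PB)).
Qed.

Lemma left_dual_partition_self_dual :
  (forall B b b', B \in P -> b' \in pblock P b ->
     \sum_(a in B) chi (a *m b) = \sum_(a in B) chi (a *m b')) ->
  (forall B a a', B \in P -> a' \in pblock P a ->
     block_transform B a' = block_transform B a) ->
  left_dual_partition P chi = P.
Proof.
move=> sums_const transform_const.
have dual_block b :
    [set b' | left_dual_rel P chi b b'] = [set b' in [set: M] | b' \in pblock P b].
  apply/setP => b'; rewrite !inE; apply/idP/idP => [rel_bb' | b'b].
    have := left_dual_rel_weighted (fun a a' => transform_const _ a a' (pblockT b)) rel_bb'.
    rewrite !sum_chi_block_transform mem_pblockT; case: (b' \in _) => // /eqP.
    by rewrite mulr0n pnatr_eq0 => /eqP/card0_eq/(_ 0).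
  by apply/forall_inP => B PB; apply/eqP/sums_const.
rewrite -[RHS](equivalence_partition_pblock partP); apply/setP => B.
by apply/imsetP/imsetP => -[b _ ->]; exists b; rewrite ?dual_block ?inE.
Qed.

End SelfDualPartition.

End GeneratingCharacter.

Section RankEquivalence.
Variables (F : fieldType) (m : nat).
Local Notation M := 'M[F]_m.

Lemma eq_mxrank_equiv (a b : M) : \rank a = \rank b ->
  exists u v, [/\ u \in unitmx, v \in unitmx & b = u *m a *m v].
Proof.
move=> rank_ab.
have [Ca_unit Ra_unit] := (col_ebase_unit a, row_ebase_unit a).
exists (col_ebase b *m invmx (col_ebase a)), (invmx (row_ebase a) *m row_ebase b).
split; rewrite ?unitmx_mul ?unitmx_inv ?col_ebase_unit ?row_ebase_unit //.
set Ca := col_ebase a; set Ra := row_ebase a.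
rewrite -(mulmx_ebase a) -{1}(mulmx_ebase b) -rank_ab -/Ca -/Ra !mulmxA.
by rewrite mulmxKV // mulmxK.
Qed.

Lemma mxrank_unit_mul (u a v : M) : u \in unitmx -> v \in unitmx ->
  \rank (u *m a *m v) = \rank a.
Proof.
move=> u_unit v_unit; rewrite mxrankMfree ?row_free_unit //.
by rewrite -mxrank_tr trmx_mul mxrankMfree ?mxrank_tr // row_free_unit unitmx_tr.
Qed.

End RankEquivalence.

Section RankPartition.
Variables (F : finFieldType) (m : nat).
Local Notation M := 'M[F]_m.

Definition rank_partition : {set {set M}} := preim_partition (@mxrank F m m) [set: M].

Lemma rank_partitionP : partition rank_partition [set: M].
Proof. exact: preim_partitionP. Qed.

Lemma mem_pblock_rank (a a' : M) :
  (a' \in pblock rank_partition a) = (\rank a == \rank a').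
Proof. by rewrite pblock_equivalence_partition // => ? ? ? _ _ _; split=> // /eqP->. Qed.

Lemma sum_rank_block_unit_mul (V : nmodType) (f : M -> V) (B : {set M}) (u v : M) :
  B \in rank_partition -> u \in unitmx -> v \in unitmx ->
  \sum_(a in B) f (u *m a *m v) = \sum_(a in B) f a.
Proof.
case/imsetP => x _ -> u_unit v_unit.
have mul_uvK : cancel (fun a => u *m a *m v) (fun a => invmx u *m a *m invmx v).
  by move=> a; rewrite !mulmxA mulVmx // mul1mx -mulmxA mulmxV // mulmx1.
rewrite [RHS](reindex_inj (can_inj mul_uvK)) /=.
by apply: eq_bigl => a; rewrite !inE mxrank_unit_mul.
Qed.

End RankPartition.
Arguments rank_partition {F m}.

Lemma rank_partition_self_dual (F : finFieldType) (m : nat) (chi : 'M[F]_m -> algC) :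
  generating_character chi -> left_dual_partition rank_partition chi = rank_partition.
Proof.
move=> chi_gen; apply: (left_dual_partition_self_dual chi_gen (rank_partitionP F m)).
- move=> B b b' rank_B.
  rewrite mem_pblock_rank => /eqP/eq_mxrank_equiv[u [v [u_unit v_unit ->]]].
  have [v' v'_unit chi_v] := chi_unit_transfer_r chi_gen v_unit.
  under [RHS]eq_bigr => a _ do rewrite !mulmxA chi_v !mulmxA.
  by rewrite (sum_rank_block_unit_mul (fun a => chi (a *m b))).
- move=> B a a' rank_B.
  rewrite mem_pblock_rank => /eqP/eq_mxrank_equiv[u [v [u_unit v_unit ->]]].
  have [u' u'_unit chi_u] := chi_unit_transfer_l chi_gen u_unit.
  rewrite /block_transform; under eq_bigr => c _ do
    rewrite -!mulmxA -mulmxN chi_u mulNmx -mulmxA.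
  by rewrite (sum_rank_block_unit_mul (fun c => chi (- (a *m c)))).
Qed.

Section HomCoef.
Variables (R : realFieldType) (q : R) (m : nat).
Hypothesis q_ge2 : 2 <= q.

Fixpoint hom_mag (j : nat) : R :=
  if j is j'.+1 then hom_mag j' * (q ^+ j' / (q ^+ m - q ^+ j')) else 1.

Definition hom_coef (j : nat) : R := (-1) ^+ j * hom_mag j.

Let qX_gt0 j : 0 < q ^+ j.
Proof. by apply: exprn_gt0; have := q_ge2; lra. Qed.

Let qX_lt j k : (j < k)%N -> q ^+ j < q ^+ k.
Proof. by move=> jk; rewrite ltr_eXn2l //; have := q_ge2; lra. Qed.

Let hom_ratio_gt0 j : (j < m)%N -> 0 < q ^+ j / (q ^+ m - q ^+ j).
Proof. by move=> jm; rewrite divr_gt0 // subr_gt0 qX_lt. Qed.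

Let hom_ratio_le1 j : (j < m)%N -> q ^+ j / (q ^+ m - q ^+ j) <= 1.
Proof.
move=> jm; have qjm : q ^+ j.+1 <= q ^+ m.
  by move: jm; rewrite leq_eqVlt => /orP[/eqP-> // | /qX_lt]; lra.
rewrite ler_pdivrMr ?subr_gt0 ?qX_lt // mul1r.
by move: qjm; rewrite exprSr; have := qX_gt0 j; have := q_ge2; nra.
Qed.

Let hom_ratio_lt1 j : (j.+1 < m)%N -> q ^+ j / (q ^+ m - q ^+ j) < 1.
Proof.
move=> jm; have qjm : q ^+ j.+2 <= q ^+ m.
  by move: jm; rewrite leq_eqVlt => /orP[/eqP-> // | /qX_lt]; lra.
rewrite ltr_pdivrMr ?subr_gt0 ?qX_lt 1?ltnW // mul1r.
have qq : q ^+ j * 4 <= q ^+ j * (q * q).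
  by rewrite ler_pM2l //; have := q_ge2; nra.
by move: qjm; rewrite !exprSr -mulrA; have := qX_gt0 j; lra.
Qed.

Lemma hom_mag_gt0 j : (j <= m)%N -> 0 < hom_mag j.
Proof.
elim: j => [|j IHj] jm /=; first lra.
by rewrite mulr_gt0 ?IHj ?hom_ratio_gt0 // ltnW.
Qed.

Lemma hom_mag_le j k : (j <= k)%N -> (k <= m)%N -> hom_mag k <= hom_mag j.
Proof.
elim: k => [|k IHk] jk km; first by case: j jk.
move: jk; rewrite leq_eqVlt => /orP[/eqP-> // | /= jk].
have := IHk jk (ltnW km); have := hom_ratio_le1 km; have := hom_mag_gt0 (ltnW km).
nra.
Qed.

Lemma hom_mag_lt j k : (j.+2 <= k)%N -> (k <= m)%N -> hom_mag k < hom_mag j.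
Proof.
move=> jk km; have jm : (j.+1 < m)%N := leq_trans jk km.
have := hom_mag_le jk km; rewrite /= -mulrA.
have r_lt1 : q ^+ j / (q ^+ m - q ^+ j) * (q ^+ j.+1 / (q ^+ m - q ^+ j.+1)) < 1.
  have := hom_ratio_lt1 jm; have := hom_ratio_le1 jm; have := hom_ratio_gt0 (ltnW jm).
  nra.
have := hom_mag_gt0 (ltnW (ltnW jm)); nra.
Qed.

Lemma hom_coef_inj j k : (j <= m)%N -> (k <= m)%N -> hom_coef j = hom_coef k -> j = k.
Proof.
wlog jk : j k / (j <= k)%N.
  move=> wlog_jk jm km E; case: (leqP j k) => [jk | /ltnW kj]; first exact: wlog_jk.
  exact/esym/wlog_jk.
move=> jm km; move: jk; rewrite leq_eqVlt => /orP[/eqP // | jk].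
rewrite /hom_coef -(signr_odd _ j) -(signr_odd _ k) => E; exfalso.
have [mag_j mag_k] := (hom_mag_gt0 jm, hom_mag_gt0 km).
case: (boolP (odd j == odd k)) => [/eqP odd_jk | ]; last first.
  by move: E; case: (odd j); case: (odd k); rewrite ?expr0 ?expr1 //; lra.
have jk2 : (j.+2 <= k)%N.
  move: jk; rewrite leq_eqVlt => /orP[/eqP kE | //].
  by move: odd_jk; rewrite -kE /=; case: (odd j).
have := hom_mag_lt jk2 km; move: E; rewrite odd_jk.
by case: (odd k); rewrite ?expr0 ?expr1; lra.
Qed.

Lemma hom_coef_rec j : (j < m)%N ->
  q ^+ j * hom_coef j + (q ^+ m - q ^+ j) * hom_coef j.+1 = 0.
Proof.
move=> jm; have qmj_neq0 : q ^+ m - q ^+ j != 0 by rewrite subr_eq0 gt_eqF ?qX_lt.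
by rewrite /hom_coef /= exprS; field.
Qed.

End HomCoef.

Lemma mxrank_col_mx_row (F : fieldType) (m d : nat) (r : 'rV[F]_m) (Z : 'M[F]_(d, m)) :
  \rank (col_mx r Z) = (\rank Z + ~~ (r <= Z)%MS)%N.
Proof.
rewrite -addsmxE; have [rZ | rNZ] := boolP (r <= Z)%MS.
  by rewrite addn0; apply/eqmx_rank/eqmxP/addsmx_idPr.
have r_neq0 : r != 0 by apply: contraNneq rNZ => ->; rewrite sub0mx.
rewrite mxrank_disjoint_sum; first by rewrite rank_rV r_neq0 addnC.
apply/eqP; rewrite -submx0; apply: contraNT rNZ => cap_neq0.
apply: submx_trans (capmxSr r Z); rewrite -(mxrank_leqif_sup (capmxSl r Z)).2.
rewrite eqn_leq mxrankS ?capmxSl //= rank_rV r_neq0 lt0n mxrank_eq0.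
by rewrite -submx0.
Qed.

Section HomWeight.
Variables (F : finFieldType) (m : nat) (Rr : realType).
Local Notation M := 'M[F]_m.
Local Notation q := (#|F|%:R : Rr).
Local Notation coef := (hom_coef q m).

Lemma card_field_gt1 : (1 < #|F|)%N.
Proof. by apply/card_gt1P; exists 0, 1; rewrite !inE eq_sym oner_neq0. Qed.

Lemma card_field_ge2 : 2 <= q.
Proof. by rewrite ler_nat card_field_gt1. Qed.

Lemma card_rV_submx d (Z : 'M[F]_(d, m)) :
  #|[set r : 'rV[F]_m | (r <= Z)%MS]| = (#|F| ^ \rank Z)%N.
Proof.
rewrite (eq_card (_ : _ =i [set u *m row_base Z | u : 'rV_(\rank Z)])).
  rewrite card_imset ?card_mx ?mul1n //; exact/row_free_inj/row_base_free.
move=> r; rewrite inE -(eq_row_base Z); apply/submxP/imsetP => -[u].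
  by exists u.
by move=> _ ->; exists u.
Qed.

Lemma sum_hom_coef_rows d : (d < m)%N ->
  \sum_(Z : 'M[F]_(1 + d, m)) coef (\rank Z) = 0.
Proof.
move=> dm.
rewrite (reindex (fun p : 'rV[F]_m * 'M[F]_(d, m) => col_mx p.1 p.2)) /=; last first.
  exists (fun Z => (usubmx Z, dsubmx Z)) => [[r Z] _ | Z _] /=.
    by rewrite col_mxKu col_mxKd.
  by rewrite vsubmxK.
rewrite -(pair_big predT predT (fun r Z => coef (\rank (col_mx r Z)))) /=.
rewrite exchange_big /=; apply: big1 => Z _.
set S := [set r : 'rV[F]_m | (r <= Z)%MS].
have card_notS : #|~: S| = (#|F| ^ m - #|F| ^ \rank Z)%N.
  by rewrite -card_rV_submx -[m in (_ ^ m)%N]mul1n -card_mx -(cardsC S) addKn.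
rewrite (bigID [in S]) /=.
have -> : \sum_(r in S) coef (\rank (col_mx r Z)) = coef (\rank Z) *+ #|S|.
  rewrite -[_ *+ #|S|]sumr_const; apply: eq_bigr => r.
  by rewrite in_set mxrank_col_mx_row => ->; rewrite addn0.
have -> : \sum_(r | r \notin S) coef (\rank (col_mx r Z)) = coef (\rank Z).+1 *+ #|~: S|.
  rewrite -[_ *+ #|~: S|]sumr_const; apply: eq_big => [r | r]; rewrite ?in_setC //.
  by rewrite in_set mxrank_col_mx_row => /negbTE->; rewrite addn1.
have rank_lt : (\rank Z < m)%N := leq_ltn_trans (rank_leq_row Z) dm.
have card_le : (#|F| ^ \rank Z <= #|F| ^ m)%N.
  by rewrite leq_exp2l ?card_field_gt1 // ltnW.
rewrite card_rV_submx card_notS -[_ *+ (_ ^ _)%N]mulr_natr -[_ *+ (_ - _)%N]mulr_natr.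
rewrite natrB // !natrX [X in X + _]mulrC [X in _ + X]mulrC.
exact: (hom_coef_rec card_field_ge2 rank_lt).
Qed.

Lemma lideal_submx (x y : M) : (y \in lideal x) = (y <= x)%MS.
Proof. by apply/imsetP/submxP => [[r _ ->] | [r ->]]; exists r. Qed.

Lemma mem_lideal (x : M) : x \in lideal x.
Proof. by rewrite lideal_submx submx_refl. Qed.

Lemma lidealE (x : M) : lideal x = [set Y *m row_base x | Y : 'M[F]_(m, \rank x)].
Proof.
apply/setP => y; rewrite lideal_submx -(eq_row_base x).
by apply/submxP/imsetP => [[Y ->] | [Y _ ->]]; exists Y.
Qed.

Lemma sum_lideal_hom_coef (x : M) : x != 0 -> \sum_(y in lideal x) coef (\rank y) = 0.
Proof.
move=> x_neq0; rewrite lidealE big_imset /=; last first.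
  by move=> Y Y' _ _; apply: (row_free_inj (row_base_free x)).
under eq_bigr do rewrite mxrankMfree ?row_base_free //.
have : (0 < \rank x)%N by rewrite lt0n mxrank_eq0.
case: (\rank x) (rank_leq_row x) => // d dm _.
rewrite (reindex (@trmx F d.+1 m)) /=; last first.
  by exists (@trmx F m d.+1) => Z _; rewrite trmxK.
under eq_bigr do rewrite mxrank_tr.
exact: sum_hom_coef_rows.
Qed.

Definition hom_weight_rank (y : M) : Rr := 1 - coef (\rank y).

Lemma hom_weight_rankP : is_norm_hom_weight hom_weight_rank.
Proof.
split=> [|x y lideal_xy|x x_neq0].
- by rewrite /hom_weight_rank mxrank0 /hom_coef /= mulr1 subrr.
- have xy : (x <= y)%MS by rewrite -lideal_submx -lideal_xy mem_lideal.
  have yx : (y <= x)%MS by rewrite -lideal_submx lideal_xy mem_lideal.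
  by rewrite /hom_weight_rank; congr (1 - coef _); apply/eqP; rewrite eqn_leq !mxrankS.
- rewrite /hom_weight_rank sumrB sum_lideal_hom_coef // subr0 sumr_const.
  by rewrite -mulr_natr mul1r.
Qed.

Lemma norm_hom_weight_unique (w1 w2 : M -> Rr) :
  is_norm_hom_weight w1 -> is_norm_hom_weight w2 -> w1 =1 w2.
Proof.
move=> [w1_0 w1_gen w1_sum] [w2_0 w2_gen w2_sum] x.
have [n] := ubnP #|lideal x|; elim: n x => // n IHn x /ltnSE card_x.
have [-> | x_neq0] := eqVneq x 0; first by rewrite w1_0 w2_0.
have := w1_sum x x_neq0; rewrite -(w2_sum x x_neq0).
rewrite (bigID (fun y => lideal y == lideal x)).
rewrite [RHS](bigID (fun y => lideal y == lideal x)) /=.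
have -> : \sum_(y in lideal x | lideal y != lideal x) w1 y =
          \sum_(y in lideal x | lideal y != lideal x) w2 y.
  apply: eq_bigr => y /andP[y_x lideal_yx]; apply: IHn.
  apply: leq_trans card_x; apply: proper_card; rewrite properEneq lideal_yx /=.
  rewrite lideal_submx in y_x.
  by apply/subsetP => z; rewrite !lideal_submx => /submx_trans->.
move/addIr; under eq_bigr => y /andP[_ /eqP/w1_gen->] do [].
under [RHS]eq_bigr => y /andP[_ /eqP/w2_gen->] do [].
rewrite !sumr_const => /eqP; rewrite eqr_pMn2r => [/eqP // |].
by apply/card_gt0P; exists x; rewrite unfold_in /= mem_lideal eqxx.
Qed.

Lemma level_partition_hom_weight (w : M -> Rr) :
  is_norm_hom_weight w -> level_partition w = rank_partition.
Proof.
move=> /norm_hom_weight_unique/(_ hom_weight_rankP) w_rank.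
have level_set x : [set a | w a == w x] = [set a in [set: M] | \rank x == \rank a].
  apply/setP => a; rewrite !inE /= !w_rank /hom_weight_rank eq_sym.
  rewrite (inj_eq (addrI _)) (inj_eq oppr_inj); apply/eqP/eqP => [| -> //].
  exact: (hom_coef_inj card_field_ge2 (rank_leq_row _) (rank_leq_row _)).
by apply/setP => B; apply/imsetP/imsetP => -[x _ ->]; exists x; rewrite ?level_set.
Qed.

End HomWeight.

Theorem theorem5p9 (F : finFieldType) (m : nat) (Hm : (1 < m)%N)
  (Rr : realType) (w : 'M[F]_m -> Rr) (Hw : is_norm_hom_weight w)
  (chi : 'M[F]_m -> algC) (Hchi : generating_character chi) :
  left_dual_partition (level_partition w) chi = level_partition w.
Proof.
by rewrite (level_partition_hom_weight Hw); apply: rank_partition_self_dual.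
Qed.
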